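(* Let $(A^{\mathbb{Z}},T)$ be the Pacman cellular automaton and let $w\in A^{+}$ be a nonempty finite word. For each integer $i\geq 0$ define $$x^{i}= {}^{\infty}\mathtt{0}\,.\,w\,\mathtt{1}\,\mathtt{0}^{i}\,\mathtt{K}\,\mathtt{0}^{\infty},$$ that is, $x^i$ has the word $w$ starting at coordinate $0$, followed immediately by the symbol $\mathtt{1}$, then $i$ copies of $\mathtt{0}$, then the symbol $\mathtt{K}$, and all other coordinates equal to $\mathtt{0}$. Then there exist integers $N,M\geq 0$ such that for every integer $j\geq 0$, $$(T^{N+j}x^{M+j})_{0}\in\{\mathtt{G},\mathtt{K},\mathtt{D}\}.$$
   Context: Let $A=\{\mathtt{0},\mathtt{1},\mathtt{G},\mathtt{K},\mathtt{P},\mathtt{D}\}$ (intended meanings: $\mathtt{0}$ empty space, $\mathtt{1}$ empty door, $\mathtt{G}$ ghost, $\mathtt{K}$ keymaster ghost, $\mathtt{P}$ pacman, $\mathtt{D}$ door with ghost). $A^{+}$ denotes the set of nonempty finite words over $A$. The Pacman CA is the map $T:A^{\mathbb{Z}}\to A^{\mathbb{Z}}$ defined coordinatewise as follows, writing $a=x_{i-1}$, $b=x_i$, $c=x_{i+1}$: - $(Tx)_i=\mathtt{0}$ if $\big(a\in\{\mathtt{0},\mathtt{G},\mathtt{K}\}\wedge[(b\in\{\mathtt{0},\mathtt{G},\mathtt{K}\}\wedge c\in\{\mathtt{0},\mathtt{1},\mathtt{P}\})\vee(b=\mathtt{P}\wedge c\notin\{\mathtt{1},\mathtt{D}\})]\big)\vee\big(a\in\{\mathtt{1},\mathtt{D}\}\wedge[(b\in\{\mathtt{0},\mathtt{K}\}\wedge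 c\in\{\mathtt{0},\mathtt{1},\mathtt{P}\})\vee(b=\mathtt{P}\wedge c\notin\{\mathtt{1},\mathtt{D}\})]\big)$; - $(Tx)_i=\mathtt{1}$ if $b\in\{\mathtt{1},\mathtt{D}\}\wedge c\notin\{\mathtt{K},\mathtt{D}\}$; - $(Tx)_i=\mathtt{G}$ if $(a\in\{\mathtt{0},\mathtt{G},\mathtt{K}\}\wedge b\in\{\mathtt{0},\mathtt{G},\mathtt{K}\}\wedge c\in\{\mathtt{G},\mathtt{D}\})\vee(a\in\{\mathtt{1},\mathtt{D}\}\wedge b\in\{\mathtt{0},\mathtt{K}\}\wedge c=\mathtt{D})$; - $(Tx)_i=\mathtt{K}$ if $\big(c=\mathtt{K}\wedge[(a\in\{\mathtt{0},\mathtt{G},\mathtt{K}\}\wedge b\in\{\mathtt{0},\mathtt{G},\mathtt{K}\})\vee(a\in\{\mathtt{1},\mathtt{D}\}\wedge b\in\{\mathtt{0},\mathtt{K}\})]\big)\vee(a=\mathtt{P}\wedge b\notin\{\mathtt{1},\mathtt{D}\}\wedge c\in\{\mathtt{1},\mathtt{D}\})\vee(b=\mathtt{P}\wedge c\in\{\mathtt{1},\mathtt{D}\})$; - $(Tx)_i=\mathtt{P}$ if $\big(a=\mathtt{1}\wedge[(b\in\{\mathtt{0},\mathtt{K}\}\wedge c=\mathtt{G})\vee b=\mathtt{G}]\big)\vee(a=\mathtt{P}\wedge b\notin\{\mathtt{1},\mathtt{D}\}\wedge c\notin\{\mathtt{1},\mathtt{D}\})$; - $(Tx)_i=\mathtt{D}$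 if $b\in\{\mathtt{1},\mathtt{D}\}\wedge c\in\{\mathtt{K},\mathtt{D}\}$. Notation ${}^{\infty}\mathtt{0}\,.\,u\,\mathtt{0}^{\infty}$ means the point whose coordinates $0,1,\dots,|u|-1$ spell the word $u$ and all other coordinates are $\mathtt{0}$; the dot marks coordinate $0$. *)

From Stdlib Require Import ZArith List.
Import ListNotations.
Open Scope Z_scope.
Open Scope bool_scope.

Inductive sym : Type := S0 | S1 | SG | SK | SP | SD.

Definition sym_eqb (x y : sym) : bool :=
  match x, y with
  | S0, S0 | S1, S1 | SG, SG | SK, SK | SP, SP | SD, SD => true
  | _, _ => false
  end.

Definition memb (x : sym) (l : list sym) : bool := existsb (sym_eqb x) l.

Definition config := Z -> sym.

(* The six clauses are pairwise disjoint; they leave the 8 triples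
   (D,G,_) and (D,{0,K},G) uncovered, for which we return P. *)
Definition local_rule (a b c : sym) : sym :=
  if (memb a [S0;SG;SK] && ((memb b [S0;SG;SK] && memb c [S0;S1;SP])
                             || (sym_eqb b SP && negb (memb c [S1;SD]))))
     || (memb a [S1;SD] && ((memb b [S0;SK] && memb c [S0;S1;SP])
                             || (sym_eqb b SP && negb (memb c [S1;SD]))))
  then S0
  else if memb b [S1;SD] && negb (memb c [SK;SD]) then S1
  else if (memb a [S0;SG;SK] && memb b [S0;SG;SK] && memb c [SG;SD])
          || (memb a [S1;SD] && memb b [S0;SK] && sym_eqb c SD)
  then SG
  else if (sym_eqb c SK && ((memb a [S0;SG;SK] && memb b [S0;SG;SK])
                            || (memb a [S1;SD] && memb b [S0;SK])))
          || (sym_eqb a SP && negb (memb b [S1;SD]) && memb c [S1;SD])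
          || (sym_eqb b SP && memb c [S1;SD])
  then SK
  else if (sym_eqb a S1 && ((memb b [S0;SK] && sym_eqb c SG) || sym_eqb b SG))
          || (sym_eqb a SP && negb (memb b [S1;SD]) && negb (memb c [S1;SD]))
  then SP
  else if memb b [S1;SD] && memb c [SK;SD] then SD
  else SP .

Definition pacman (x : config) : config :=
  fun i => local_rule (x (i - 1)) (x i) (x (i + 1)).

Definition pacman_iter (n : nat) (x : config) : config := Nat.iter n pacman x.

Definition xi (w : list sym) (i : nat) : config :=
  fun z =>
    let n := Z.of_nat (length w) in
    if (0 <=? z) && (z <? n) then nth (Z.to_nat z) w S0
    else if z =? n then S1
    else if z =? n + Z.of_nat i + 1 then SK
    else S0.

(* Doors keep their door status forever, and away from doors G and K can only
   come from the right neighbour and P only from the left.  Hence between a door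
   that has settled to 1 and a boundary that never holds P, the cells are swept
   to 0 (first G, then P, then K); starting from the door that ends [w], this
   cascades to the left and brings the orbit of [^oo 0 . w 1 0^oo] to rest
   (1 on doors, 0 elsewhere) on every bounded window.  In [xi w i] the K walks
   left through zeros and reaches that door exactly at time [i], so for large [i]
   the point [T^i (xi w i)] agrees near 0 with the rest configuration plus a K
   next to the door.  The latter is not at rest, and a rest configuration is its
   own only preimage (a check on windows of five cells), so its orbit never
   settles; as its right end does settle, the left half cannot stay blank, i.e.
   some G, K or D shows up at coordinate 0 at a time [s].  By locality the same
   [s] works for every [xi w (M + j)]. *)

From Stdlib Require Import ZArith List Lia Classical.
Import ListNotations.
Open Scope Z_scope.

Definition is_door (s : sym) : bool := match s with S1 | SD => true | _ => false end.

Definition rest_sym (s : sym) : sym := if is_door s then S1 else S0.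

(* Configurations over {0, 1} are fixed by [pacman] (see [local_rule_rest]). *)
Definition rest (x : config) : config := fun z => rest_sym (x z).

Definition passive (s : sym) : bool := match s with S0 | SG | SK => true | _ => false end.

Lemma local_rule_SG_inv a b c : local_rule a b c = SG -> c = SG \/ c = SD.
Proof. destruct a, b, c; cbn; intros H; try discriminate; auto. Qed.

Lemma local_rule_SP_inv a b c :
  local_rule a b c = SP -> a = SP \/ (is_door a = true /\ (b = SG \/ c = SG)).
Proof. destruct a, b, c; cbn; intros H; try discriminate; auto. Qed.

Lemma local_rule_SK_inv a b c : local_rule a b c = SK -> c = SK \/ a = SP \/ b = SP.
Proof. destruct a, b, c; cbn; intros H; try discriminate; auto. Qed.

Lemma is_door_local_rule a b c : is_door (local_rule a b c) = is_door b.
Proof. destruct a, b, c; reflexivity. Qed.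

Lemma local_rule_door a b c : is_door b = true -> c = S0 \/ c = S1 -> local_rule a b c = S1.
Proof. intros Hb [-> | ->]; destruct a, b; cbn in *; congruence. Qed.

Lemma passive_local_rule a b c :
  passive a = true -> passive b = true -> passive (local_rule a b c) = true.
Proof. destruct a, b, c; cbn; congruence. Qed.

Lemma local_rule_rest a b c : a <> SP -> local_rule a (rest_sym b) (rest_sym c) = rest_sym b.
Proof. destruct a, b, c; cbn; congruence. Qed.

Lemma local_rule_S0_S0 c : ~ In c [SG; SK; SD] -> local_rule S0 S0 c = S0.
Proof. intros H; destruct c; try reflexivity; exfalso; apply H; cbn; tauto. Qed.

Lemma local_rule_rest_preimage a b c d e :
  local_rule a b c = rest_sym b -> local_rule b c d = rest_sym c ->
  local_rule c d e = rest_sym d -> c = rest_sym c.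
Proof.
  intros Hb Hc Hd.
  destruct c; try reflexivity; destruct b, d; cbn in Hc; try discriminate;
    destruct a; cbn in Hb; try discriminate; destruct e; cbn in Hd; discriminate.
Qed.

Lemma pacman_iter_S t x z :
  pacman_iter (S t) x z =
  local_rule (pacman_iter t x (z - 1)) (pacman_iter t x z) (pacman_iter t x (z + 1)).
Proof. reflexivity. Qed.

Lemma pacman_iter_succ_r t x : pacman_iter (S t) x = pacman_iter t (pacman x).
Proof. apply Nat.iter_succ_r. Qed.

Lemma pacman_iter_add s t x : pacman_iter (s + t) x = pacman_iter s (pacman_iter t x).
Proof. apply Nat.iter_add. Qed.

Lemma is_door_iter t x z : is_door (pacman_iter t x z) = is_door (x z).
Proof.
  revert z; induction t as [|t IH]; intros z; [reflexivity|].
  rewrite pacman_iter_S, is_door_local_rule; apply IH.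
Qed.

Lemma rest_iter t x z : rest (pacman_iter t x) z = rest x z.
Proof. unfold rest, rest_sym; now rewrite is_door_iter. Qed.

Lemma iter_door_not_SP t x z : is_door (x z) = true -> pacman_iter t x z <> SP.
Proof. intros Hd E; rewrite <- (is_door_iter t), E in Hd; discriminate. Qed.

Lemma passive_iter x c :
  (forall z, z <= c -> passive (x z) = true) ->
  forall t z, z <= c -> passive (pacman_iter t x z) = true.
Proof.
  intros Hx t; induction t as [|t IH]; intros z Hz; [now apply Hx|].
  rewrite pacman_iter_S; apply passive_local_rule; apply IH; lia.
Qed.

Lemma pacman_iter_local s y y' c :
  (forall z, c - Z.of_nat s <= z <= c + Z.of_nat s -> y z = y' z) ->
  pacman_iter s y c = pacman_iter s y' c.
Proof.
  revert c; induction s as [|s IH]; intros c H; [apply H; lia|].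
  rewrite !pacman_iter_S; f_equal; apply IH; intros; apply H; lia.
Qed.

Lemma rest_of_pacman_rest y :
  (forall z, pacman y z = rest y z) -> forall z, y z = rest y z.
Proof.
  intros H z.
  apply (local_rule_rest_preimage (y (z - 2)) (y (z - 1)) (y z) (y (z + 1)) (y (z + 2))).
  - transitivity (pacman y (z - 1)); [unfold pacman; do 2 f_equal; lia | apply H].
  - apply H.
  - transitivity (pacman y (z + 1)); [unfold pacman; do 2 f_equal; lia | apply H].
Qed.

Lemma rest_of_iter_rest t y :
  (forall z, pacman_iter t y z = rest y z) -> forall z, y z = rest y z.
Proof.
  induction t as [|t IH]; intros H; [exact H|].
  apply IH; intros z; rewrite <- (rest_iter t y z).
  apply rest_of_pacman_rest; intros z'; rewrite rest_iter; apply H.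
Qed.

Lemma swept_out (P : nat -> nat -> Prop) (t0 : nat) :
  (forall t, (t0 <= t)%nat -> ~ P t O) ->
  (forall t k, (t0 <= t)%nat -> P (S t) (S k) -> P t k) ->
  forall k t, (t0 + k <= t)%nat -> ~ P t k.
Proof.
  intros Hbase Hstep k; induction k as [|k IH]; intros t Ht HP.
  - apply (Hbase t); [lia | exact HP].
  - destruct t as [|t]; [lia|].
    apply (IH t); [lia|]; apply Hstep; [lia | exact HP].
Qed.

Section Segment.

Variables (x : config) (a b : Z) (t1 : nat).
Hypothesis no_door_between : forall z, a < z < b -> is_door (x z) = false.
Hypothesis never_SP_at_a : forall t, pacman_iter t x a <> SP.
Hypothesis S1_at_b : forall t, (t1 <= t)%nat -> pacman_iter t x b = S1.

Lemma segment_no_SD t p : (t1 <= t)%nat -> a < p <= b -> pacman_iter t x p <> SD.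
Proof.
  intros Ht Hp E.
  destruct (Z.eq_dec p b) as [->|Hpb]; [rewrite S1_at_b in E by lia; discriminate|].
  pose proof (is_door_iter t x p) as Hd; rewrite E, no_door_between in Hd by lia.
  discriminate.
Qed.

(* Each of G, P, K can only be produced from a neighbour on one side, so the
   boundary where it cannot occur sweeps it out of the segment at unit speed. *)

Lemma segment_no_SG t p :
  (t1 + Z.to_nat (b - a) <= t)%nat -> a < p <= b -> pacman_iter t x p <> SG.
Proof.
  intros Ht Hp E.
  apply (swept_out (fun t k => (k < Z.to_nat (b - a))%nat /\
                               pacman_iter t x (b - Z.of_nat k) = SG)
           t1) with (k := Z.to_nat (b - p)) (t := t); [| | lia | split; [lia|]].
  - intros t' Ht' [_ E']; rewrite Z.sub_0_r, S1_at_b in E' by lia; discriminate.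
  - intros t' k Ht' [Hk E']; split; [lia|].
    rewrite pacman_iter_S in E'; apply local_rule_SG_inv in E' as [E'|E'];
      replace (b - Z.of_nat (S k) + 1) with (b - Z.of_nat k) in E' by lia; [exact E'|].
    exfalso; apply (segment_no_SD t' (b - Z.of_nat k)); [lia | lia | exact E'].
  - now replace (b - Z.of_nat (Z.to_nat (b - p))) with p by lia.
Qed.

Lemma segment_no_SP t p :
  (t1 + 2 * Z.to_nat (b - a) <= t)%nat -> a <= p < b -> pacman_iter t x p <> SP.
Proof.
  intros Ht Hp E.
  apply (swept_out (fun t k => (k < Z.to_nat (b - a))%nat /\
                               pacman_iter t x (a + Z.of_nat k) = SP)
           (t1 + Z.to_nat (b - a))) with (k := Z.to_nat (p - a)) (t := t);
    [| | lia | split; [lia|]].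
  - intros t' Ht' [_ E']; rewrite Z.add_0_r in E'; exact (never_SP_at_a t' E').
  - intros t' k Ht' [Hk E']; split; [lia|].
    rewrite pacman_iter_S in E'; apply local_rule_SP_inv in E' as [E'|[_ [E'|E']]].
    + now replace (a + Z.of_nat k) with (a + Z.of_nat (S k) - 1) by lia.
    + exfalso; apply (segment_no_SG t' (a + Z.of_nat (S k))); [lia | lia | exact E'].
    + exfalso; apply (segment_no_SG t' (a + Z.of_nat (S k) + 1)); [lia | lia | exact E'].
  - now replace (a + Z.of_nat (Z.to_nat (p - a))) with p by lia.
Qed.

Lemma segment_no_SK t p :
  (t1 + 3 * Z.to_nat (b - a) <= t)%nat -> a < p <= b -> pacman_iter t x p <> SK.
Proof.
  intros Ht Hp E.
  apply (swept_out (fun t k => (k < Z.to_nat (b - a))%nat /\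
                               pacman_iter t x (b - Z.of_nat k) = SK)
           (t1 + 2 * Z.to_nat (b - a))) with (k := Z.to_nat (b - p)) (t := t);
    [| | lia | split; [lia|]].
  - intros t' Ht' [_ E']; rewrite Z.sub_0_r, S1_at_b in E' by lia; discriminate.
  - intros t' k Ht' [Hk E']; split; [lia|].
    rewrite pacman_iter_S in E'; apply local_rule_SK_inv in E' as [E'|[E'|E']].
    + now replace (b - Z.of_nat k) with (b - Z.of_nat (S k) + 1) by lia.
    + exfalso; apply (segment_no_SP t' (b - Z.of_nat (S k) - 1)); [lia | lia | exact E'].
    + exfalso; apply (segment_no_SP t' (b - Z.of_nat (S k))); [lia | lia | exact E'].
  - now replace (b - Z.of_nat (Z.to_nat (b - p))) with p by lia.
Qed.

Lemma segment_rests t z :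
  (t1 + 3 * Z.to_nat (b - a) <= t)%nat -> a < z < b -> pacman_iter t x z = S0.
Proof.
  intros Ht Hz.
  pose proof (is_door_iter t x z) as Hd; rewrite no_door_between in Hd by lia.
  pose proof (segment_no_SG t z) as HG; pose proof (segment_no_SP t z) as HP;
    pose proof (segment_no_SK t z) as HK.
  destruct (pacman_iter t x z); try discriminate; try reflexivity; exfalso;
    [apply HG | apply HK | apply HP]; auto; lia.
Qed.

End Segment.

Lemma nearest_true_below (f : Z -> bool) lo b :
  lo <= b ->
  (forall z, lo <= z < b -> f z = false) \/
  exists a, lo <= a < b /\ f a = true /\ forall z, a < z < b -> f z = false.
Proof.
  remember (Z.to_nat (b - lo)) as k eqn:Hk; revert b Hk.
  induction k as [|k IH]; intros b Hk Hb; [left; intros; lia|].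
  destruct (f (b - 1)) eqn:Hf.
  - right; exists (b - 1); repeat split; auto; lia.
  - destruct (IH (b - 1)) as [Hnone | (a & Ha & Hfa & Hgap)]; [lia | lia | left | right].
    + intros z Hz; destruct (Z.eq_dec z (b - 1)) as [->|]; auto; apply Hnone; lia.
    + exists a; repeat split; auto; try lia.
      intros z Hz; destruct (Z.eq_dec z (b - 1)) as [->|]; auto; apply Hgap; lia.
Qed.

Section Cascade.

Variables (x : config) (lo : Z).
Hypothesis never_SP_below_lo : forall t, pacman_iter t x (lo - 1) <> SP.

Lemma cascade_rests b :
  lo <= b -> is_door (x b) = true ->
  (exists t1, forall t, (t1 <= t)%nat -> pacman_iter t x b = S1) ->
  exists T, forall t, (T <= t)%nat -> forall z, lo <= z < b -> pacman_iter t x z = rest x z.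
Proof.
  remember (Z.to_nat (b - lo)) as m eqn:Hm; revert b Hm.
  induction m as [m IH] using lt_wf_ind; intros b Hm Hb Hdb [t1 Ht1].
  destruct (nearest_true_below (fun z => is_door (x z)) lo b Hb)
    as [Hnone | (a & Ha & Hda & Hgap)].
  - exists (t1 + 3 * Z.to_nat (b - (lo - 1)))%nat; intros t Ht z Hz.
    unfold rest, rest_sym; rewrite Hnone by lia.
    apply (segment_rests x (lo - 1) b t1); auto; [|lia].
    intros z' Hz'; destruct (Z.eq_dec z' (lo - 1)) as [->|]; [lia | apply Hnone; lia].
  - set (T := (t1 + 3 * Z.to_nat (b - a))%nat).
    assert (Hseg : forall t, (T <= t)%nat -> forall z, a < z < b -> pacman_iter t x z = S0).
    { intros t Ht z Hz; apply (segment_rests x a b t1); auto.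
      intros t'; apply iter_door_not_SP; exact Hda. }
    assert (Ha1 : forall t, (S (Nat.max T t1) <= t)%nat -> pacman_iter t x a = S1).
    { intros [|t] Ht; [lia|].
      rewrite pacman_iter_S; apply local_rule_door; [now rewrite is_door_iter|].
      destruct (Z.eq_dec (a + 1) b) as [->|]; [right; apply Ht1; lia|].
      left; apply Hseg; lia. }
    destruct (IH (Z.to_nat (a - lo))) with (b := a) as [T' HT']; auto; try lia.
    { exists (S (Nat.max T t1)); exact Ha1. }
    exists (Nat.max T' (S (Nat.max T t1))); intros t Ht z Hz.
    destruct (Z_lt_le_dec z a); [apply HT'; lia|].
    destruct (Z.eq_dec z a) as [->|].
    + unfold rest, rest_sym; rewrite Hda; apply Ha1; lia.
    + unfold rest, rest_sym; rewrite Hgap by lia; apply Hseg; lia.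
Qed.

End Cascade.


Definition rests_from (x : config) (n : Z) : Prop := forall z, n <= z -> x z = rest x z.

Lemma pacman_rests_from x n :
  is_door (x n) = true -> (forall z, n < z -> x z = rest x z) -> rests_from (pacman x) n.
Proof.
  intros Hn Hr z Hz; transitivity (rest x z); [unfold pacman | symmetry; exact (rest_iter 1 x z)].
  destruct (Z.eq_dec z n) as [->|Hzn].
  - unfold rest at 1, rest_sym at 1; rewrite Hn; apply local_rule_door; [exact Hn|].
    rewrite Hr by lia; unfold rest, rest_sym; destruct (is_door (x (n + 1))); auto.
  - rewrite (Hr z), (Hr (z + 1)) by lia; apply local_rule_rest.
    destruct (Z.eq_dec (z - 1) n) as [->|].
    + exact (iter_door_not_SP 0 x n Hn).
    + rewrite Hr by lia; unfold rest, rest_sym; destruct (is_door (x (z - 1))); discriminate.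
Qed.

Lemma iter_rests_from x n :
  is_door (x n) = true -> (forall z, n < z -> x z = rest x z) ->
  forall t, rests_from (pacman_iter (S t) x) n.
Proof.
  intros Hn Hr t; induction t as [|t IH]; [now apply pacman_rests_from|].
  apply (pacman_rests_from (pacman_iter (S t) x)).
  - now rewrite is_door_iter.
  - intros z Hz; apply IH; lia.
Qed.

Ltac decide_Z_eqb :=
  repeat match goal with |- context [?u =? ?v] => destruct (Z.eqb_spec u v); try lia end.

Definition door_K (x : config) (n q : Z) : Prop :=
  forall z, n <= z -> x z = if z =? n then S1 else if z =? q then SK else S0.

Lemma pacman_door_K x n q : n + 1 < q -> door_K x n q -> door_K (pacman x) n (q - 1).
Proof.
  intros Hq Hx z Hz; unfold pacman.
  destruct (Z.eq_dec z n) as [->|Hzn].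
  - rewrite (Hx n), (Hx (n + 1)) by lia; decide_Z_eqb; apply local_rule_door; auto.
  - rewrite !Hx by lia; decide_Z_eqb; reflexivity.
Qed.

Lemma iter_door_K x n i : door_K x n (n + 1 + Z.of_nat i) -> door_K (pacman_iter i x) n (n + 1).
Proof.
  revert x; induction i as [|i IH]; intros x Hx.
  - now rewrite Z.add_0_r in Hx.
  - rewrite pacman_iter_succ_r; apply IH.
    replace (n + 1 + Z.of_nat i) with (n + 1 + Z.of_nat (S i) - 1) by lia.
    apply pacman_door_K; [lia | exact Hx].
Qed.

Lemma pacman_door_K_adjacent x n :
  door_K x n (n + 1) -> is_door (pacman x n) = true /\ forall z, n < z -> pacman x z = S0.
Proof.
  intros Hx; split.
  - unfold pacman; rewrite is_door_local_rule, Hx by lia; now rewrite Z.eqb_refl.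
  - intros z Hz; unfold pacman; rewrite !Hx by lia; decide_Z_eqb; reflexivity.
Qed.

(* If the left half stays blank while the right end settles, the whole configuration
   eventually rests, and the uniqueness of rest preimages forces [y] itself to rest. *)
Lemma emits_left y b :
  0 <= b -> (forall z, z < 0 -> y z = S0) -> is_door (y b) = true ->
  (exists t0, forall t, (t0 <= t)%nat -> rests_from (pacman_iter t y) b) ->
  (exists z, y z <> rest y z) ->
  exists s, In (pacman_iter s y 0) [SG; SK; SD].
Proof.
  intros Hb Hneg Hdoor [t0 Hright] [z0 Hz0].
  apply NNPP; intros Hsilent.
  assert (Hzero : forall t z, z < 0 -> pacman_iter t y z = S0).
  { induction t as [|t IH]; intros z Hz; [now apply Hneg|].
    rewrite pacman_iter_S, (IH (z - 1)), (IH z) by lia; apply local_rule_S0_S0.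
    destruct (Z.eq_dec z (-1)) as [->|].
    - intros Hin; apply Hsilent; now exists t.
    - rewrite IH by lia; cbn; intuition discriminate. }
  destruct (cascade_rests y 0) with (b := b) as [T HT]; auto.
  { intros t; rewrite Hzero by lia; discriminate. }
  { exists t0; intros t Ht; rewrite (Hright t Ht b) by lia.
    unfold rest, rest_sym; now rewrite is_door_iter, Hdoor. }
  apply Hz0, (rest_of_iter_rest (Nat.max T t0)); intros z.
  destruct (Z_lt_le_dec z 0) as [Hz|Hz]; [|destruct (Z_lt_le_dec z b)].
  - unfold rest; now rewrite Hzero, Hneg.
  - apply HT; lia.
  - rewrite Hright by lia; apply rest_iter.
Qed.

Definition door_pos (w : list sym) : Z := Z.of_nat (length w).

Lemma door_pos_nonneg w : 0 <= door_pos w.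
Proof. unfold door_pos; lia. Qed.

Definition base (w : list sym) : config :=
  fun z => if (0 <=? z) && (z <? door_pos w) then nth (Z.to_nat z) w S0
           else if z =? door_pos w then S1 else S0.

Definition rest_base_K (w : list sym) : config :=
  fun z => if z =? door_pos w + 1 then SK else rest (base w) z.

Lemma base_outside w z : z < 0 \/ door_pos w <= z -> base w z = if z =? door_pos w then S1 else S0.
Proof.
  intros Hz; unfold base.
  replace ((0 <=? z) && (z <? door_pos w)) with false; [reflexivity|].
  symmetry; apply Bool.andb_false_iff.
  destruct Hz; [left; apply Z.leb_gt | right; apply Z.ltb_ge]; lia.
Qed.

Lemma xi_eq_base w i z : z <> door_pos w + Z.of_nat i + 1 -> xi w i z = base w z.
Proof.
  intros Hz; unfold xi, base, door_pos in *; cbv zeta.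
  destruct (_ && _); [reflexivity|]; destruct (z =? _); [reflexivity|].
  now rewrite (proj2 (Z.eqb_neq _ _) Hz).
Qed.

Lemma door_K_xi w i : door_K (xi w i) (door_pos w) (door_pos w + 1 + Z.of_nat i).
Proof.
  intros z Hz.
  destruct (Z.eq_dec z (door_pos w + Z.of_nat i + 1)) as [->|Hzi].
  - unfold xi; fold (door_pos w); decide_Z_eqb.
    replace ((0 <=? _) && _) with false; [reflexivity|].
    symmetry; apply Bool.andb_false_iff; right; apply Z.ltb_ge; lia.
  - rewrite xi_eq_base, base_outside by lia; decide_Z_eqb; reflexivity.
Qed.

Lemma door_K_rest_base_K w : door_K (rest_base_K w) (door_pos w) (door_pos w + 1).
Proof.
  intros z Hz; unfold rest_base_K, rest.
  rewrite base_outside by lia; decide_Z_eqb; reflexivity.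
Qed.

Lemma base_rests w lo :
  lo <= 0 ->
  exists T, forall t, (T <= t)%nat ->
    forall z, lo <= z < door_pos w -> pacman_iter t (base w) z = rest (base w) z.
Proof.
  intros Hlo; pose proof (door_pos_nonneg w).
  assert (Hdoor : is_door (base w (door_pos w)) = true)
    by (rewrite base_outside, Z.eqb_refl by lia; reflexivity).
  assert (Hright : forall z, door_pos w < z -> base w z = rest (base w) z)
    by (intros z Hz; unfold rest; rewrite base_outside by lia; decide_Z_eqb; reflexivity).
  apply cascade_rests; auto; [|lia|].
  - intros t Ht.
    assert (Hpassive : passive (pacman_iter t (base w) (lo - 1)) = true).
    { apply (passive_iter _ (-1)); [|lia].
      intros z Hz; rewrite base_outside by lia; decide_Z_eqb; reflexivity. }
    rewrite Ht in Hpassive; discriminate.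
  - exists 1%nat; intros [|t] Ht; [lia|].
    rewrite (iter_rests_from _ _ Hdoor Hright t (door_pos w)) by lia.
    unfold rest, rest_sym; now rewrite is_door_iter, Hdoor.
Qed.

Lemma rest_base_K_emits w : exists s, In (pacman_iter s (rest_base_K w) 0) [SG; SK; SD].
Proof.
  pose proof (door_K_rest_base_K w) as HK; pose proof (door_pos_nonneg w).
  destruct (pacman_door_K_adjacent _ _ HK) as [Hdoor Hzeros].
  apply (emits_left _ (door_pos w)).
  - lia.
  - intros z Hz; unfold rest_base_K, rest; rewrite base_outside by lia; decide_Z_eqb; reflexivity.
  - rewrite HK, Z.eqb_refl by lia; reflexivity.
  - exists 2%nat; intros [|[|t]] Ht; try lia.
    rewrite pacman_iter_succ_r; apply iter_rests_from; [exact Hdoor|].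
    intros z Hz; unfold rest; now rewrite Hzeros.
  - exists (door_pos w + 1); rewrite HK by lia; unfold rest; rewrite HK by lia.
    decide_Z_eqb; discriminate.
Qed.

(* Left of the door the K has not been felt yet, right of it the K has just reached
   the door; once the cascade has settled the word, this is [rest_base_K w]. *)
Lemma iter_xi_eq_rest_base_K w lo T :
  (forall t, (T <= t)%nat ->
     forall z, lo <= z < door_pos w -> pacman_iter t (base w) z = rest (base w) z) ->
  forall t, (T <= t)%nat -> forall z, lo <= z -> pacman_iter t (xi w t) z = rest_base_K w z.
Proof.
  intros HT t Ht z Hz.
  destruct (Z_lt_le_dec z (door_pos w)) as [Hzn|Hzn].
  - rewrite (pacman_iter_local t (xi w t) (base w)).
    + rewrite HT by lia; unfold rest_base_K; decide_Z_eqb; reflexivity.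
    + intros z' Hz'; apply xi_eq_base; lia.
  - rewrite (iter_door_K _ _ _ (door_K_xi w t)), door_K_rest_base_K by lia; reflexivity.
Qed.

Theorem mainTheorem1 (w : list sym) (Hw : w <> []) :
  exists N M : nat, forall j : nat,
    In (pacman_iter (N + j) (xi w (M + j)) 0%Z) [SG; SK; SD].
Proof.
  destruct (rest_base_K_emits w) as [s Hs].
  destruct (base_rests w (- Z.of_nat s)) as [T HT]; [lia|].
  exists (s + T)%nat, T; intros j.
  rewrite <- Nat.add_assoc, pacman_iter_add.
  rewrite (pacman_iter_local s _ (rest_base_K w)); [exact Hs|].
  intros z Hz; apply (iter_xi_eq_rest_base_K w (- Z.of_nat s) T HT); lia.
Qed.
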